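(* Let $G=(V,E,\omega)$ be the unweighted star graph on $n\geq3$ nodes. Then $G\in\mathcal C$.
   Context: The unweighted star graph on $n$ nodes has $V=\{1,\dots,n\}$, $\omega_{1j}=\omega_{j1}=1$ for $j\in\{2,\dots,n\}$ and all other $\omega_{ij}=0$. $d_i=\sum_j\omega_{ij}$. Fixed $r\in[0,1]$: for $u:V\to\mathbb R$, $(\Delta u)_i=d_i^{-r}\sum_j\omega_{ij}(u_i-u_j)$, $\mathcal M(u)=\sum_id_i^ru_i$, $\mathrm{vol}(V)=\sum_id_i^r$, $\mathcal A(u)=\frac{\mathcal M(u)}{\mathrm{vol}(V)}\chi_V$. Equilibrium measure $\nu^S$ ($S\subsetneq V$): the unique $\nu$ with $(\Delta\nu)_i=1$ on $S$ and $\nu=0$ off $S$. $f^j:=\nu^{V\setminus\{j\}}-\mathcal A(\nu^{V\setminus\{j\}})$. $\mathcal C$ is the set of finite, simple, connected, undirected, positively edge-weighted graphs (with at least two nodes) such that $f^j_i\geq0$ for all $j\in V$ and all $i\in V\setminus\{j\}$. *)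

From mathcomp Require Import all_boot all_order all_algebra.
From mathcomp Require Import reals exp.
Set Implicit Arguments. Unset Strict Implicit. Unset Printing Implicit Defensive.
Import Order.TTheory GRing.Theory Num.Theory.
Local Open Scope ring_scope.

Section Graphs.
Variables (R : realType) (n : nat).

Definition deg (w : 'I_n -> 'I_n -> R) (i : 'I_n) : R := \sum_(j < n) w i j.

Definition lap (r : R) (w : 'I_n -> 'I_n -> R) (u : 'I_n -> R) (i : 'I_n) : R :=
  powR (deg w i) (- r) * \sum_(j < n) w i j * (u i - u j).

Definition mass (r : R) (w : 'I_n -> 'I_n -> R) (u : 'I_n -> R) : R :=
  \sum_(i < n) powR (deg w i) r * u i.

Definition vol (r : R) (w : 'I_n -> 'I_n -> R) : R :=
  \sum_(i < n) powR (deg w i) r.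

Definition avg (r : R) (w : 'I_n -> 'I_n -> R) (u : 'I_n -> R) : 'I_n -> R :=
  fun _ => mass r w u / vol r w.

Definition is_equilibrium (r : R) (w : 'I_n -> 'I_n -> R) (S : {set 'I_n})
    (nu : 'I_n -> R) : Prop :=
  (forall i, i \in S -> lap r w nu i = 1) /\ (forall i, i \notin S -> nu i = 0).

(* finite, simple, connected, undirected, positively edge-weighted graph
   with at least two nodes (edges = pairs with nonzero weight). *)
Definition is_graph (w : 'I_n -> 'I_n -> R) : Prop :=
  [/\ (2 <= n)%N,
      forall i j, w i j = w j i,
      forall i j, 0 <= w i j,
      forall i, w i i = 0 &
      forall i j, connect (fun a b => w a b != 0) i j].

(* The equilibrium measure is required
   to exist, and the condition is imposed on it (it is unique). *)
Definition inC (r : R) (w : 'I_n -> 'I_n -> R) : Prop :=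
  is_graph w /\
  forall j : 'I_n,
    (exists nu, is_equilibrium r w [set~ j] nu) /\
    forall nu, is_equilibrium r w [set~ j] nu ->
      forall i, i != j -> 0 <= nu i - avg r w nu i.

(* Unweighted star graph: node 1 of the paper is index 0 here. *)
Definition star (i j : 'I_n) : R :=
  if ((val i == 0%N) && (val j != 0%N)) || ((val j == 0%N) && (val i != 0%N))
  then 1 else 0.

End Graphs.

(** Let the centre be [0] and the [p = n - 1] leaves have degree [1].  A leaf
    [k] in [S] sees only the centre, so [nu k = nu 0 + 1].  The average
    [A(nu)] is a weighted mean of [nu] with weights [d_i^r]; subtracting
    [nu 0] gives [A(nu) - nu 0 = -p^r (Delta nu)_0 / vol(V)].  Hence when a
    leaf is removed, [(Delta nu)_0 = 1] puts [A(nu)] below [nu 0] and so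
    below every value of [nu] on [S].  When the centre is removed, [nu] is [0]
    there and [1] on the leaves, and [A(nu)] is at most the maximum [1]. *)
From mathcomp Require Import all_boot all_order all_algebra.
From mathcomp Require Import reals exp.
From mathcomp Require Import ring lra.
Import Order.TTheory GRing.Theory Num.Theory.
Local Open Scope ring_scope.

Lemma sum_if_eq (R : comPzRingType) (T : finType) (j : T) (a b : R) :
  \sum_(k : T) (if k == j then b else a) = b + a * (#|T|%:R - 1).
Proof.
have -> : \sum_(k : T) (if k == j then b else a) =
          \sum_(k : T) a + \sum_(k : T) (if k == j then b - a else 0).
  by rewrite -big_split /=; apply: eq_bigr => k _; case: ifP => _; ring.
by rewrite -big_mkcond big_pred1_eq sumr_const -mulr_natr; ring.
Qed.

Lemma avg_le_ub (R : realType) (n : nat) (r : R) (w : 'I_n -> 'I_n -> R)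
    (u : 'I_n -> R) (m : R) (i : 'I_n) :
  0 < vol r w -> (forall k, u k <= m) -> avg r w u i <= m.
Proof.
move=> vol_gt0 u_le_m; rewrite /avg ler_pdivrMr // /vol mulr_sumr.
by apply: ler_sum => k _; rewrite [m * _]mulrC ler_wpM2l ?powR_ge0.
Qed.

Section Star.
Variables (R : realType) (p : nat) (r : R).
Hypothesis p_gt0 : (0 < p)%N.

Local Notation S := (@star R p.+1).
Local Notation leaf k := (lift ord0 k).
Local Notation d := (powR p%:R r).

Lemma leaf_neq0 (k : 'I_p) : (leaf k == ord0) = false.
Proof. by apply/negbTE; rewrite eq_sym neq_lift. Qed.

Lemma star00 : S ord0 ord0 = 0. Proof. by rewrite /star. Qed.
Lemma star0l k : S ord0 (leaf k) = 1. Proof. by rewrite /star. Qed.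
Lemma starl0 k : S (leaf k) ord0 = 1. Proof. by rewrite /star. Qed.
Lemma starll k k' : S (leaf k) (leaf k') = 0. Proof. by rewrite /star. Qed.

Lemma deg_star_center : deg S ord0 = p%:R.
Proof.
rewrite /deg big_ord_recl star00 add0r.
by under eq_bigr do rewrite star0l; rewrite sumr_const card_ord.
Qed.

Lemma deg_star_leaf k : deg S (leaf k) = 1.
Proof.
rewrite /deg big_ord_recl starl0.
by under eq_bigr do rewrite starll; rewrite big1 // addr0.
Qed.

Lemma star_pow_gt0 : 0 < d.
Proof. by apply: powR_gt0; rewrite ltr0n. Qed.

Lemma lap_star_center nu :
  lap r S nu ord0 = (\sum_(k < p) (nu ord0 - nu (leaf k))) / d.
Proof.
rewrite /lap deg_star_center powRN mulrC big_ord_recl star00 mul0r add0r.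
by under eq_bigr do rewrite star0l mul1r.
Qed.

Lemma lap_star_leaf nu k : lap r S nu (leaf k) = nu (leaf k) - nu ord0.
Proof.
rewrite /lap deg_star_leaf big_ord_recl starl0 mul1r powR1 mul1r.
by under eq_bigr do rewrite starll mul0r; rewrite big1 // addr0.
Qed.

Lemma mass_star nu : mass r S nu = d * nu ord0 + \sum_(k < p) nu (leaf k).
Proof.
rewrite /mass big_ord_recl deg_star_center.
by under eq_bigr do rewrite deg_star_leaf powR1 mul1r.
Qed.

Lemma vol_star : vol r S = d + p%:R.
Proof.
rewrite /vol big_ord_recl deg_star_center.
by under eq_bigr do rewrite deg_star_leaf powR1; rewrite sumr_const card_ord.
Qed.

Lemma vol_star_gt0 : 0 < vol r S.
Proof. by rewrite vol_star addr_gt0 ?star_pow_gt0 ?ltr0n. Qed.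

Lemma star_is_graph : is_graph S.
Proof.
have S_sym i j : S i j = S j i by rewrite /star orbC.
have to_center i : connect (fun a b => S a b != 0) i ord0.
  case: (unliftP ord0 i) => [k ->|->]; last exact: connect0.
  by apply: connect1; rewrite starl0 oner_neq0.
split=> //.
- by move=> i j; rewrite /star; case: ifP.
- by move=> i; rewrite /star !andbN.
move=> i j; apply: connect_trans (to_center i) _.
by rewrite sym_connect_sym ?to_center // => a b; rewrite S_sym.
Qed.

Lemma avg_star_le_center nu i :
  0 <= lap r S nu ord0 -> avg r S nu i <= nu ord0.
Proof.
have d_gt0 := star_pow_gt0.
rewrite lap_star_center pmulr_lge0 ?invr_gt0 // => lap_ge0.
rewrite /avg ler_pdivrMr ?vol_star_gt0 // mass_star vol_star.
have : \sum_(k < p) nu (leaf k) <= \sum_(k < p) nu ord0.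
  by rewrite -subr_ge0 -sumrB.
by rewrite sumr_const card_ord -mulr_natr; lra.
Qed.

Lemma equilibrium_leaf_value {S' nu} k :
  is_equilibrium r S S' nu -> leaf k \in S' -> nu (leaf k) = nu ord0 + 1.
Proof. by case=> eq1 _ /eq1; rewrite lap_star_leaf => <-; ring. Qed.

Lemma star_center_removed_exists :
  exists nu, is_equilibrium r S [set~ ord0] nu.
Proof.
exists (fun i => if i == ord0 then 0 else 1); split=> i; rewrite in_setC1.
  case: (unliftP ord0 i) => [k ->|-> //] _.
  by rewrite lap_star_leaf eqxx leaf_neq0 subr0.
by rewrite negbK => /eqP ->; rewrite eqxx.
Qed.

Lemma star_center_removed_ge0 nu :
  is_equilibrium r S [set~ ord0] nu ->
  forall i, i != ord0 -> 0 <= nu i - avg r S nu i.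
Proof.
move=> eq_nu i; have nu0 : nu ord0 = 0 by apply: eq_nu.2; rewrite !inE eqxx.
have nu_leaf k : nu (leaf k) = 1.
  by rewrite (equilibrium_leaf_value k eq_nu) ?nu0 ?add0r // !inE leaf_neq0.
case: (unliftP ord0 i) => [k ->|-> //] _.
rewrite nu_leaf subr_ge0; apply: avg_le_ub vol_star_gt0 _ => j.
by case: (unliftP ord0 j) => [k' ->|->]; rewrite ?nu_leaf ?nu0 ?ler01.
Qed.

Lemma star_leaf_removed_exists j :
  exists nu, is_equilibrium r S [set~ leaf j] nu.
Proof.
pose c := d + p%:R - 1.
exists (fun i => if i == ord0 then c else if i == leaf j then 0 else c + 1).
split=> i; rewrite in_setC1; last first.
  by rewrite negbK => /eqP ->; rewrite leaf_neq0 eqxx.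
case: (unliftP ord0 i) => [k ->|->] k_neq.
  by rewrite lap_star_leaf eqxx leaf_neq0 (negbTE k_neq); ring.
rewrite lap_star_center eqxx.
under eq_bigr do rewrite leaf_neq0 (inj_eq lift_inj) (fun_if (fun x => c - x)).
rewrite sum_if_eq card_ord.
have -> : c - 0 + (c - (c + 1)) * (p%:R - 1) = d by rewrite /c; ring.
by rewrite divff // lt0r_neq0 // star_pow_gt0.
Qed.

Lemma star_leaf_removed_ge0 j nu :
  is_equilibrium r S [set~ leaf j] nu ->
  forall i, i != leaf j -> 0 <= nu i - avg r S nu i.
Proof.
move=> eq_nu i i_neq; rewrite subr_ge0.
have avg_le : avg r S nu i <= nu ord0.
  by apply: avg_star_le_center; rewrite eq_nu.1 ?ler01 // !inE eq_sym leaf_neq0.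
case: (unliftP ord0 i) i_neq => [k ->|-> //] k_neq.
by rewrite (equilibrium_leaf_value k eq_nu) ?inE //; lra.
Qed.

End Star.

Theorem lemma6p4 (R : realType) (n : nat) (r : R) :
  (3 <= n)%N -> 0 <= r <= 1 -> inC r (@star R n).
Proof.
case: n => [//|p] /ltnW p_gt0 _; split; first exact: star_is_graph.
move=> j; case: (unliftP ord0 j) => [j' ->|->]; split.
- exact: star_leaf_removed_exists.
- exact: star_leaf_removed_ge0 R p r p_gt0 j'.
- exact: star_center_removed_exists R p r.
- exact: star_center_removed_ge0 R p r p_gt0.
Qed.
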